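(* The Lagrange spectrum of $\mathbb{Q}((1/T))$ equals $$\{L(A): A=(g_i)_{i\in\mathbb{Z}} \text{ a doubly infinite sequence of polynomials } g_i\in\mathbb{Q}[T] \text{ with } \deg g_i\ge1\}.$$
   Context: $\mathbb{Q}((1/T))$ is the field of formal Laurent series in $1/T$ over $\mathbb{Q}$; $\deg$ of a nonzero series is the exponent of its leading term, $\deg0=-\infty$. For polynomials $c_0,c_1,\dots$ with $\deg c_j\ge1$ for $j\ge1$, $[c_0,c_1,c_2,\dots]=c_0+\cfrac{1}{c_1+\cfrac{1}{c_2+\cdots}}$ converges in $\mathbb{Q}((1/T))$. For a doubly infinite sequence $A=(g_i)_{i\in\mathbb{Z}}$ of polynomials of positive degree, $\lambda_i(A)=[g_i,g_{i+1},\dots]+[0,g_{i-1},g_{i-2},\dots]$ and $L(A)=\limsup_{|i|\to\infty}\deg\lambda_i(A)$ (the larger of the limsups as $i\to+\infty$ and $i\to-\infty$), a value in $\mathbb{Z}\cup\{\infty\}$. Lagrange spectrum: for $\alpha\notin\mathbb{Q}(T)$, $l(\alpha)\in\mathbb{Z}\cup\{\infty\}$ is the supremum of integers $k$ such that $\deg(\alpha-p/q)\le-2\deg q-k$ for infinitely many $p,q\in\mathbb{Q}[T]$, $q\neq0$; the Lagrange spectrum is $\{l(\alpha):\alpha\in\mathbb{Q}((1/T))\setminus\mathbb{Q}(T)\}$. *)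

From HB Require Import structures.
From mathcomp Require Import all_boot all_order all_algebra.
From mathcomp Require Import all_classical all_reals.
From mathcomp Require Import ereal topology normedtype sequences.
From mathcomp Require Import Rstruct.
From Stdlib Require Import ClassicalEpsilon.

Set Implicit Arguments. Unset Strict Implicit. Unset Printing Implicit Defensive.
Import Order.TTheory GRing.Theory Num.Theory.
Local Open Scope ring_scope.
Local Open Scope classical_set_scope.

(* ---------- Formal Laurent series in 1/T over Q ----------
   A series is represented by an integer [top] and a coefficient stream
   [fc : nat -> rat]; it denotes  sum_{k>=0} fc k * T^(top - k).
   Two representations denote the same series iff [coef] agrees. *)
Record LS := mkLS { top : int; fc : nat -> rat }.

Definition coef (x : LS) (n : int) : rat :=
  if n <= top x then fc x `|top x - n|%N else 0.

Definition eqLS (x y : LS) : Prop := forall n, coef x n = coef y n.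

Definition LSzero : LS := mkLS 0 (fun _ => 0).

Definition LSpoly (p : {poly rat}) : LS :=
  mkLS (size p)%:Z (fun k => if (k <= size p)%N then p`_(size p - k) else 0).

Definition LSone : LS := LSpoly 1.

Definition LSadd (x y : LS) : LS :=
  let t := Num.max (top x) (top y) in
  mkLS t (fun k => coef x (t - k%:Z) + coef y (t - k%:Z)).

Definition LSopp (x : LS) : LS := mkLS (top x) (fun k => - fc x k).

Definition LSsub (x y : LS) : LS := LSadd x (LSopp y).

Definition LSmul (x y : LS) : LS :=
  mkLS (top x + top y) (fun k => \sum_(j < k.+1) fc x j * fc y (k - j)).

(* multiplicative inverse (chosen; unspecified for 0) *)
Definition LSinv (x : LS) : LS :=
  epsilon (inhabits LSzero) (fun y => eqLS (LSmul x y) LSone).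

Definition LSdiv (x y : LS) : LS := LSmul x (LSinv y).

(* degree, in the extended reals; deg 0 = -oo *)
Notation RR := Rdefinitions.R.
Definition deg (x : LS) : \bar RR :=
  ereal_sup [set (n%:~R)%:E | n in [set n : int | coef x n != 0]].

Fixpoint cfin (c : nat -> LS) (n : nat) : LS :=
  match n with
  | 0 => c 0%N
  | m.+1 => LSadd (c 0%N) (LSinv (cfin (fun k => c k.+1) m))
  end.

(* x is the limit in Q((1/T)) of the convergents [c_0,...,c_n] *)
Definition cf_limit (c : nat -> LS) (x : LS) : Prop :=
  forall M : int, exists n0 : nat, forall n : nat, (n0 <= n)%N ->
    forall m : int, M < m -> coef (cfin c n) m = coef x m.

Definition cf (c : nat -> LS) : LS := epsilon (inhabits LSzero) (cf_limit c).

Definition lambda (g : int -> {poly rat}) (i : int) : LS :=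
  LSadd (cf (fun n => LSpoly (g (i + n%:Z))))
        (cf (fun n => if n == 0%N then LSzero else LSpoly (g (i - n%:Z)))).

Definition LA (g : int -> {poly rat}) : \bar RR :=
  maxe (limn_esup (fun n : nat => deg (lambda g n%:Z)))
       (limn_esup (fun n : nat => deg (lambda g (- n%:Z)))).

Definition is_ratfun (a : LS) : Prop :=
  exists p q : {poly rat}, q != 0 /\ eqLS a (LSdiv (LSpoly p) (LSpoly q)).

(* the set of (distinct) rational functions p/q, q <> 0, with
   deg(a - p/q) <= -2 deg q - k; elements are identified by their
   coefficient functions *)
Definition approx_set (a : LS) (k : int) : set (int -> rat) :=
  [set coef (LSdiv (LSpoly pq.1) (LSpoly pq.2)) | pq in
    [set pq : {poly rat} * {poly rat} | pq.2 != 0 /\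
      (deg (LSsub a (LSdiv (LSpoly pq.1) (LSpoly pq.2)))
        <= ((- 2 * ((size pq.2)%:Z - 1) - k)%:~R)%:E)%E]].

Definition lagr (a : LS) : \bar RR :=
  ereal_sup [set (k%:~R)%:E | k in [set k : int | infinite_set (approx_set a k)]].

Definition lagrange_spectrum : set (\bar RR) :=
  [set lagr a | a in [set a | ~ is_ratfun a]].

Definition L_values : set (\bar RR) :=
  [set LA g | g in [set g : int -> {poly rat} | forall i, (1 < size (g i))%N]].

(* Both sets equal {+oo} U {1, 2, 3, ...}.

   For L: the continued fraction [g_i, g_(i+1), ...] has the degree of g_i
   and [0, g_(i-1), ...] has negative degree, so deg lambda_i(A) = deg g_i >= 1
   and L(A) is a limsup of positive integers.  Constant g_i = T^k gives k, and
   g_i = T^(|i|+1) gives +oo.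

   For the Lagrange spectrum: the exponents k admitting infinitely many
   approximations form a downward closed set of integers, and it contains 1 by
   the polynomial Dirichlet theorem (a nonzero q of degree <= N kills N
   coefficients of q alpha by linear algebra).  Hence l(alpha) is +oo or a
   positive integer.  The series sum_m T^(-3^m) has l = +oo.  For k >= 1, the
   Pell solutions of D Q^2 - P^2 = -1 with D = T^2k - 1 give approximations of
   sqrt D of exactness exactly k, while a better approximation p/q would make
   the polynomial D q^2 - p^2 of negative degree, hence zero; so l(sqrt D) = k. *)

From Stdlib Require Setoid Ring.
From HB Require Import structures.
From mathcomp Require Import all_boot all_order all_algebra.
From mathcomp Require Import all_classical all_reals.
From mathcomp Require Import ereal topology normedtype sequences.
From mathcomp Require Import Rstruct zify.
From Stdlib Require Import ClassicalEpsilon Ring_tac.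

Set Implicit Arguments. Unset Strict Implicit. Unset Printing Implicit Defensive.
Import Order.TTheory GRing.Theory Num.Theory.
Local Open Scope ring_scope.

Local Notation "x ~= y" := (eqLS x y) (at level 70).

(** * Arithmetic of Laurent series *)

Lemma coefLS_gt x n : top x < n -> coef x n = 0.
Proof. by rewrite /coef leNgt => ->. Qed.

Lemma coefLS_top x (k : nat) : coef x (top x - k%:Z) = fc x k.
Proof. rewrite /coef; have -> : top x - k%:Z <= top x by lia. congr fc; lia. Qed.

Lemma coefLSD x y n : coef (LSadd x y) n = coef x n + coef y n.
Proof.
rewrite {1}/coef /LSadd /=; set t := Num.max (top x) (top y).
have hx : top x <= t by rewrite le_max lexx.
have hy : top y <= t by rewrite le_max lexx orbT.
case: ifP => hn; first by have -> : t - `|t - n|%N%:Z = n by lia.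
by rewrite !coefLS_gt ?addr0 //; lia.
Qed.

Lemma coefLSN x n : coef (LSopp x) n = - coef x n.
Proof. by rewrite /coef /=; case: ifP; rewrite ?oppr0. Qed.

Lemma coefLS0 n : coef LSzero n = 0.
Proof. by rewrite /coef; case: ifP. Qed.

Lemma coefLSB x y n : coef (LSsub x y) n = coef x n - coef y n.
Proof. by rewrite coefLSD coefLSN. Qed.

Lemma coefLSP p n : coef (LSpoly p) n = if 0 <= n then p`_`|n|%N else 0.
Proof.
rewrite /coef /LSpoly /=; case: ifP => hn; case: ifP => h0.
- by rewrite ifT; [congr (p`_ _)|]; lia.
- by rewrite ifF //; apply/negbTE/negP; lia.
- by rewrite nth_default //; lia.
- by [].
Qed.

Lemma coefLS1 n : coef LSone n = (n == 0)%:R.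
Proof.
rewrite /LSone coefLSP coefC; case: (n =P 0) => [->|hn] //=.
by case: ifP => // _; rewrite ifF //; apply/negbTE; lia.
Qed.

(* [LSmul] convolves the coefficient streams from the top coefficients; the
   window sums below compute the same coefficient from any window of indices
   outside of which the convolution terms vanish. *)
Definition conv_term x y n (i : int) := coef x i * coef y (n - i).
Definition conv_window x y n (h : int) (N : nat) :=
  \sum_(j < N) conv_term x y n (h - j%:Z).

Lemma coefLSM_top x y n : n <= top x + top y ->
  coef (LSmul x y) n = conv_window x y n (top x) (absz (top x + top y - n)%R).+1.
Proof.
move=> hn; rewrite {1}/coef /= hn /conv_window; apply: eq_bigr => j _.
rewrite /conv_term coefLS_top; congr (_ * _).
have hj := ltn_ord j; set k := absz (top x + top y - n)%R.
have -> : n - (top x - (nat_of_ord j)%:Z) = top y - (k - j)%N%:Z by rewrite /k; lia.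
by rewrite coefLS_top.
Qed.

Lemma conv_window_extend_top x y n h N d :
  (forall i, h < i -> conv_term x y n i = 0) ->
  conv_window x y n (h + d%:Z) (N + d) = conv_window x y n h N.
Proof.
move=> H; elim: d => [|d IH]; first by rewrite addr0 addn0.
rewrite -IH addnS {1}/conv_window big_ord_recl H /=; last by lia.
by rewrite add0r; apply: eq_bigr => j _; congr conv_term; rewrite /bump /=; lia.
Qed.

Lemma conv_window_extend_bot x y n h N d :
  (forall i, i <= h - N%:Z -> conv_term x y n i = 0) ->
  conv_window x y n h (N + d) = conv_window x y n h N.
Proof.
move=> H; elim: d => [|d IH]; first by rewrite addn0.
by rewrite -IH addnS {1}/conv_window big_ord_recr /= H ?addr0 //; lia.
Qed.

Lemma coefLSM x y n h N :
  (forall i, h < i -> conv_term x y n i = 0) ->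
  (forall i, i <= h - N%:Z -> conv_term x y n i = 0) ->
  coef (LSmul x y) n = conv_window x y n h N.
Proof.
move=> Ht Hb.
have tx i : top x < i -> conv_term x y n i = 0.
  by move=> hi; rewrite /conv_term coefLS_gt ?mul0r.
case: (lerP n (top x + top y)) => hn; last first.
  rewrite coefLS_gt //= /conv_window big1 // => j _.
  case: (lerP (h - j%:Z) (top x)) => hj; last by rewrite tx.
  by rewrite /conv_term (@coefLS_gt y) ?mulr0 //; lia.
set k := absz (top x + top y - n)%R.
have bx i : i <= top x - k.+1%:Z -> conv_term x y n i = 0.
  by move=> hi; rewrite /conv_term (@coefLS_gt y) ?mulr0 //; lia.
(* Extend the given window and that of [coefLSM_top] to a common one. *)
set H := Num.max h (top x); set lo := Num.min (h - N%:Z) (top x - k.+1%:Z).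
have h1 : h <= H by rewrite le_max lexx.
have h2 : top x <= H by rewrite le_max lexx orbT.
have h3 : lo <= h - N%:Z by rewrite ge_min lexx.
have h4 : lo <= top x - k.+1%:Z by rewrite ge_min lexx orbT.
pose d1 := absz (H - h)%R; pose e1 := absz (h - N%:Z - lo)%R.
pose d2 := absz (H - top x)%R; pose e2 := absz (top x - k.+1%:Z - lo)%R.
have -> : conv_window x y n h N = conv_window x y n H (N + e1 + d1).
  rewrite -(conv_window_extend_bot e1 Hb) -(conv_window_extend_top _ d1) //.
  by congr conv_window; rewrite /d1; lia.
rewrite coefLSM_top // -(conv_window_extend_bot e2 bx).
rewrite -(conv_window_extend_top _ d2) //.
by congr conv_window; rewrite /d1 /d2 /e1 /e2; lia.
Qed.

Lemma eqLS_refl x : x ~= x. Proof. by []. Qed.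
Lemma eqLS_sym x y : x ~= y -> y ~= x. Proof. by move=> h n; rewrite h. Qed.
Lemma eqLS_trans x y z : x ~= y -> y ~= z -> x ~= z.
Proof. by move=> h1 h2 n; rewrite h1 h2. Qed.

Lemma eqLS_fc x y : top x = top y -> fc x =1 fc y -> x ~= y.
Proof. by move=> ht hf n; rewrite /coef ht hf. Qed.

(* Commutativity and associativity of [LSmul] are inherited from {poly rat}
   by truncating the coefficient streams. *)
Definition trunc_stream (f : nat -> rat) K : {poly rat} := \poly_(i < K.+1) f i.

Lemma conv_trunc_stream (f g : nat -> rat) k K : (k <= K)%N ->
  \sum_(j < k.+1) f j * g (k - j)%N = (trunc_stream f K * trunc_stream g K)`_k.
Proof.
move=> hk; rewrite coefM; apply: eq_bigr => j _; have hj := ltn_ord j.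
by rewrite /trunc_stream !coef_poly !ifT //; lia.
Qed.

Lemma coefMl_low (P P' Q : {poly rat}) k :
  (forall j, (j <= k)%N -> P`_j = P'`_j) -> (P * Q)`_k = (P' * Q)`_k.
Proof.
move=> h; rewrite !coefM; apply: eq_bigr => j _; rewrite h //.
by have := ltn_ord j; lia.
Qed.

Lemma LSmulC x y : LSmul x y ~= LSmul y x.
Proof.
apply: eqLS_fc => [|k] /=; first by rewrite addrC.
by rewrite !(conv_trunc_stream _ _ (leqnn k)) mulrC.
Qed.

Lemma LSmulA x y z : LSmul x (LSmul y z) ~= LSmul (LSmul x y) z.
Proof.
apply: eqLS_fc => [|k] /=; first by rewrite addrA.
rewrite (conv_trunc_stream (fc x) (fun j => \sum_(i < j.+1) fc y i * fc z (j - i))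
  (leqnn k)).
rewrite (conv_trunc_stream (fun j => \sum_(i < j.+1) fc x i * fc y (j - i)) _
  (leqnn k)).
set A := trunc_stream (fc x) k; set B := trunc_stream (fc y) k.
set C := trunc_stream (fc z) k; set G := trunc_stream _ k; set F := trunc_stream _ k.
have -> : (A * G)`_k = ((B * C) * A)`_k.
  rewrite mulrC; apply: coefMl_low => j hj.
  by rewrite /G /trunc_stream coef_poly ifT ?(conv_trunc_stream _ _ hj) //; lia.
have -> : (F * C)`_k = ((A * B) * C)`_k.
  apply: coefMl_low => j hj.
  by rewrite /F /trunc_stream coef_poly ifT ?(conv_trunc_stream _ _ hj) //; lia.
by rewrite [in LHS]mulrC mulrA.
Qed.

Lemma LSmul_eql x x' y : x ~= x' -> LSmul x y ~= LSmul x' y.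
Proof.
move=> e n; pose h : int := (absz (top x))%:Z + (absz (top x'))%:Z.
pose N := (absz (h - n + top y)%R).+1.
have Ht z : top z <= h -> forall i, h < i -> conv_term z y n i = 0.
  by move=> hz i hi; rewrite /conv_term coefLS_gt ?mul0r //; lia.
have Hb z i : i <= h - N%:Z -> conv_term z y n i = 0.
  by move=> hi; rewrite /conv_term (@coefLS_gt y) ?mulr0 //; rewrite /N; lia.
rewrite (coefLSM (Ht x _) (@Hb x)) ?(coefLSM (Ht x' _) (@Hb x')) /h; try lia.
by apply: eq_bigr => j _; rewrite /conv_term e.
Qed.

Lemma LSmul_eqr x y y' : y ~= y' -> LSmul x y ~= LSmul x y'.
Proof.
move=> e; apply: eqLS_trans (LSmulC _ _) _.
exact: eqLS_trans (LSmul_eql _ e) (LSmulC _ _).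
Qed.

Lemma LSmul1 x : LSmul LSone x ~= x.
Proof.
move=> n; have t0 i : i != 0 -> conv_term LSone x n i = 0.
  by rewrite /conv_term coefLS1 => /negbTE ->; rewrite mul0r.
rewrite (@coefLSM _ _ n 0 1) => [|i hi|i hi]; last 2 first.
- by apply: t0; lia.
- by apply: t0; lia.
by rewrite /conv_window big_ord1 /conv_term subr0 coefLS1 eqxx mul1r subr0.
Qed.

Lemma LSmulDr x y z : LSmul x (LSadd y z) ~= LSadd (LSmul x y) (LSmul x z).
Proof.
move=> n; rewrite coefLSD.
pose N := (absz (top x - n)%R + absz (top y) + absz (top z)).+1.
have Ht w i : top x < i -> conv_term x w n i = 0.
  by move=> hi; rewrite /conv_term coefLS_gt ?mul0r.
have Hb w : (forall m, (absz (top y))%:Z + (absz (top z))%:Z < m -> coef w m = 0) ->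
    forall i, i <= top x - N%:Z -> conv_term x w n i = 0.
  by move=> hw i hi; rewrite /conv_term hw ?mulr0 //; rewrite /N in hi; lia.
rewrite !(coefLSM (Ht _) (Hb _ _)) => [|m hm|m hm|m hm]; last 3 first.
- by rewrite coefLS_gt //; lia.
- by rewrite coefLS_gt //; lia.
- by rewrite coefLSD !coefLS_gt ?addr0 //; lia.
by rewrite -big_split; apply: eq_bigr => j _; rewrite /conv_term coefLSD mulrDr.
Qed.

Lemma LSaddC x y : LSadd x y ~= LSadd y x.
Proof. by move=> n; rewrite !coefLSD addrC. Qed.

Lemma LSaddA x y z : LSadd x (LSadd y z) ~= LSadd (LSadd x y) z.
Proof. by move=> n; rewrite !coefLSD addrA. Qed.

Lemma LSadd0 x : LSadd LSzero x ~= x.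
Proof. by move=> n; rewrite !coefLSD coefLS0 add0r. Qed.

Lemma LSaddN x : LSadd x (LSopp x) ~= LSzero.
Proof. by move=> n; rewrite !coefLSD coefLSN coefLS0 subrr. Qed.

Lemma LSadd_eq x x' y y' : x ~= x' -> y ~= y' -> LSadd x y ~= LSadd x' y'.
Proof. by move=> e1 e2 n; rewrite !coefLSD e1 e2. Qed.

Lemma LSopp_eq x x' : x ~= x' -> LSopp x ~= LSopp x'.
Proof. by move=> e n; rewrite !coefLSN e. Qed.

Lemma LSmul_eq x x' y y' : x ~= x' -> y ~= y' -> LSmul x y ~= LSmul x' y'.
Proof. by move=> e1 e2; apply: eqLS_trans (LSmul_eql _ e1) (LSmul_eqr _ e2). Qed.

Add Parametric Relation : LS eqLS
  reflexivity proved by eqLS_refl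
  symmetry proved by eqLS_sym
  transitivity proved by eqLS_trans as eqLS_rel.

#[local] Instance LSadd_mor :
  Morphisms.Proper (Morphisms.respectful eqLS (Morphisms.respectful eqLS eqLS)) LSadd.
Proof. by move=> x x' e1 y y' e2; apply: LSadd_eq. Qed.

#[local] Instance LSmul_mor :
  Morphisms.Proper (Morphisms.respectful eqLS (Morphisms.respectful eqLS eqLS)) LSmul.
Proof. by move=> x x' e1 y y' e2; apply: LSmul_eq. Qed.

#[local] Instance LSopp_mor : Morphisms.Proper (Morphisms.respectful eqLS eqLS) LSopp.
Proof. by move=> x x' e; apply: LSopp_eq. Qed.

#[local] Instance LSsub_mor :
  Morphisms.Proper (Morphisms.respectful eqLS (Morphisms.respectful eqLS eqLS)) LSsub.
Proof. by move=> x x' e1 y y' e2; apply: LSadd_eq => //; apply: LSopp_eq. Qed.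

Lemma LS_ring_theory :
  Ring_theory.ring_theory LSzero LSone LSadd LSmul LSsub LSopp eqLS.
Proof.
split=> //; [exact: LSadd0|exact: LSaddC|exact: LSaddA|exact: LSmul1|
  exact: LSmulC|exact: LSmulA| |exact: LSaddN].
move=> x y z; apply: eqLS_trans (LSmulC _ _) _.
apply: eqLS_trans (LSmulDr _ _ _) _.
by apply: LSadd_eq; apply: LSmulC.
Qed.

Lemma LS_ring_eq_ext : Ring_theory.ring_eq_ext LSadd LSmul LSopp eqLS.
Proof. by split; [exact: LSadd_mor|exact: LSmul_mor|exact: LSopp_mor]. Qed.

Lemma LS_setoid : Setoid.Setoid_Theory LS eqLS.
Proof. by split; [exact: eqLS_refl|exact: eqLS_sym|exact: eqLS_trans]. Qed.

Add Ring LSring : LS_ring_theory (setoid LS_setoid LS_ring_eq_ext).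

Lemma LSpolyD p q : LSpoly (p + q) ~= LSadd (LSpoly p) (LSpoly q).
Proof. by move=> n; rewrite coefLSD !coefLSP; case: ifP; rewrite ?coefD ?addr0. Qed.

Lemma LSpolyM p q : LSpoly (p * q) ~= LSmul (LSpoly p) (LSpoly q).
Proof.
move=> n; rewrite coefLSP.
have vanish (r : {poly rat}) i : i < 0 -> coef (LSpoly r) i = 0.
  by move=> hi; rewrite coefLSP ifF //; apply/negbTE; lia.
case: ifP => hn; last first.
  rewrite (@coefLSM _ _ n n 0) /conv_window ?big_ord0 // => i hi.
    by rewrite /conv_term [coef (LSpoly q) _]vanish ?mulr0 //; lia.
  by rewrite /conv_term vanish ?mul0r //; lia.
rewrite (@coefLSM _ _ n n (absz n).+1) => [|i hi|i hi]; last 2 first.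
- by rewrite /conv_term [coef (LSpoly q) _]vanish ?mulr0 //; lia.
- by rewrite /conv_term vanish ?mul0r //; lia.
rewrite coefMr /conv_window; apply: eq_bigr => j _; have hj := ltn_ord j.
by rewrite /conv_term !coefLSP !ifT; [congr (_`_ _ * _`_ _)|..]; lia.
Qed.

(** * Degrees and inverses *)

Definition deg_le x (D : int) := forall n, D < n -> coef x n = 0.
Definition has_deg x d := coef x d != 0 /\ deg_le x d.

Lemma deg_le_top x : deg_le x (top x).
Proof. by move=> n hn; rewrite coefLS_gt. Qed.

Lemma deg_leW x D D' : deg_le x D -> D <= D' -> deg_le x D'.
Proof. by move=> h hD n hn; apply: h; lia. Qed.

Lemma eqLS_deg_le x y D : x ~= y -> deg_le x D -> deg_le y D.
Proof. by move=> e h n hn; rewrite -e h. Qed.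

Lemma eqLS_has_deg x y d : x ~= y -> has_deg x d -> has_deg y d.
Proof. by move=> e [h1 h2]; split; [rewrite -e|apply: eqLS_deg_le h2]. Qed.

Lemma eqLS0P x : x ~= LSzero <-> forall n, coef x n = 0.
Proof. by split => h n; rewrite h ?coefLS0. Qed.

Lemma deg_le0 x D : x ~= LSzero -> deg_le x D.
Proof. by move=> /eqLS0P h n _. Qed.

Lemma deg_leD x y D : deg_le x D -> deg_le y D -> deg_le (LSadd x y) D.
Proof. by move=> h1 h2 n hn; rewrite coefLSD h1 ?h2 ?addr0. Qed.

Lemma deg_leN x D : deg_le x D -> deg_le (LSopp x) D.
Proof. by move=> h n hn; rewrite coefLSN h ?oppr0. Qed.

Lemma deg_leM x y D E : deg_le x D -> deg_le y E -> deg_le (LSmul x y) (D + E).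
Proof.
move=> h1 h2 n hn; rewrite (@coefLSM _ _ n D 0) /conv_window ?big_ord0 // => i hi.
  by rewrite /conv_term h1 ?mul0r.
by rewrite /conv_term h2 ?mulr0 //; lia.
Qed.

Lemma has_deg_le x d D : has_deg x d -> deg_le x D -> d <= D.
Proof. by move=> [c _] h; rewrite leNgt; apply/negP => hd; move: c; rewrite h ?eqxx. Qed.

Lemma has_deg_uniq x d d' : has_deg x d -> has_deg x d' -> d = d'.
Proof.
move=> hd hd'; apply/eqP; rewrite eq_le.
by rewrite (has_deg_le hd hd'.2) (has_deg_le hd' hd.2).
Qed.

Lemma has_deg_neq0 x d : has_deg x d -> ~ x ~= LSzero.
Proof. by move=> [c _] /eqLS0P h; move: c; rewrite h eqxx. Qed.

Lemma has_degM x y d e : has_deg x d -> has_deg y e ->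
  has_deg (LSmul x y) (d + e) /\ coef (LSmul x y) (d + e) = coef x d * coef y e.
Proof.
move=> [c1 h1] [c2 h2].
have E : coef (LSmul x y) (d + e) = coef x d * coef y e.
  rewrite (@coefLSM _ _ (d + e) d 1) => [|i hi|i hi].
  - by rewrite /conv_window big_ord1 /conv_term subr0; congr (_ * coef y _); lia.
  - by rewrite /conv_term h1 ?mul0r.
  - by rewrite /conv_term h2 ?mulr0 //; lia.
by split => //; split; [rewrite E mulf_neq0|apply: deg_leM].
Qed.

Lemma has_degDl x y d : has_deg x d -> deg_le y (d - 1) ->
  has_deg (LSadd x y) d /\ coef (LSadd x y) d = coef x d.
Proof.
move=> [c1 h1] h2.
have E : coef (LSadd x y) d = coef x d by rewrite coefLSD h2 ?addr0 //; lia.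
by split => //; split; [rewrite E|apply: deg_leD h1 (deg_leW h2 _); lia].
Qed.

Lemma has_degN x d : has_deg x d -> has_deg (LSopp x) d.
Proof. by move=> [c h]; split; [rewrite coefLSN oppr_eq0|exact: deg_leN]. Qed.

Lemma has_degD_pos x y d : has_deg x d -> has_deg y d ->
  0 < coef x d -> 0 < coef y d ->
  has_deg (LSadd x y) d /\ coef (LSadd x y) d = coef x d + coef y d.
Proof.
move=> [_ hx] [_ hy] cx cy; rewrite coefLSD; split => //.
by split; [rewrite coefLSD gt_eqF ?addr_gt0|exact: deg_leD].
Qed.

Lemma has_deg_exists x : ~ x ~= LSzero -> exists d, has_deg x d.
Proof.
move=> nz.
have [n hn] : exists n, coef x n != 0.
  apply: contrapT => hh; apply: nz; apply/eqLS0P => n.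
  by apply/eqP; apply: contrapT => h; apply: hh; exists n; apply/negP.
pose P k := coef x (top x - k%:Z) != 0.
have exP : exists k, P k.
  exists (absz (top x - n)%R); rewrite /P.
  suff -> : top x - (absz (top x - n)%R)%:Z = n by [].
  by move: hn; case: (lerP n (top x)) => h; [move=> _; lia|rewrite coefLS_gt ?eqxx].
case: (ex_minnP exP) => k0 Pk0 mink.
exists (top x - k0%:Z); split => // m hm.
case: (lerP m (top x)) => hmt; last by rewrite coefLS_gt.
apply/eqP/negPn/negP => hc; have e : top x - (absz (top x - m)%R)%:Z = m by lia.
by have := mink (absz (top x - m)%R); rewrite /P e => /(_ hc); lia.
Qed.

Lemma has_deg_poly p : p != 0 ->
  has_deg (LSpoly p) ((size p)%:Z - 1) /\ coef (LSpoly p) ((size p)%:Z - 1) = lead_coef p.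
Proof.
move=> pn0; have sp : (0 < size p)%N by rewrite size_poly_gt0.
have E : coef (LSpoly p) ((size p)%:Z - 1) = lead_coef p.
  by rewrite coefLSP ifT; [rewrite /lead_coef; congr (_`_ _)|]; lia.
split => //; split; first by rewrite E lead_coef_eq0.
move=> n hn; rewrite coefLSP; case: ifP => // h0; rewrite nth_default //.
by move: hn; move: (size p) => s hs; lia.
Qed.

Lemma LSpoly_neq0 p : p != 0 -> ~ LSpoly p ~= LSzero.
Proof. by move/has_deg_poly => [/has_deg_neq0]. Qed.

Lemma has_deg_poly_neq0 (p : {poly rat}) d : has_deg (LSpoly p) d -> p != 0.
Proof. by move=> [c _]; apply: contraNneq c => ->; rewrite coefLSP coef0; case: ifP. Qed.

Lemma has_deg_one : has_deg LSone 0 /\ coef LSone 0 = 1.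
Proof.
rewrite coefLS1 eqxx; split=> //; split; first by rewrite coefLS1 eqxx oner_eq0.
by move=> n hn; rewrite coefLS1; case: (n =P 0) => //; lia.
Qed.

Definition integral_series x := forall n, n < 0 -> coef x n = 0.

Lemma integral_series_poly p : integral_series (LSpoly p).
Proof. by move=> n hn; rewrite coefLSP ifF //; apply/negbTE; lia. Qed.

Lemma integral_seriesD x y : integral_series x -> integral_series y -> integral_series (LSadd x y).
Proof. by move=> h1 h2 n hn; rewrite coefLSD h1 ?h2 ?addr0. Qed.

Lemma integral_seriesN x : integral_series x -> integral_series (LSopp x).
Proof. by move=> h n hn; rewrite coefLSN h ?oppr0. Qed.

Lemma integral_seriesM x y : integral_series x -> integral_series y -> integral_series (LSmul x y).
Proof.
move=> h1 h2 n hn; rewrite (@coefLSM _ _ n n 0) /conv_window ?big_ord0 // => i hi.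
  rewrite /conv_term; case: (ltrP i 0) => h; first by rewrite h1 ?mul0r.
  by rewrite h2 ?mulr0 //; lia.
by rewrite /conv_term h1 ?mul0r //; lia.
Qed.

Lemma integral_series_has_deg_ge0 x d : integral_series x -> has_deg x d -> 0 <= d.
Proof. by move=> h [c _]; rewrite leNgt; apply/negP => hd; move: c; rewrite h ?eqxx. Qed.

Lemma integral_series_deg_le_neg x : integral_series x -> deg_le x (-1) -> x ~= LSzero.
Proof.
move=> h1 h2; apply/eqLS0P => n.
by case: (ltrP n 0) => hn; [apply: h1|apply: h2; lia].
Qed.

(* Course-of-values recursion: [srec_seq F n] lists the first n+1 values. *)
Fixpoint srec_seq (F : nat -> (nat -> rat) -> rat) n : seq rat :=
  if n is m.+1 then rcons (srec_seq F m) (F n (nth 0 (srec_seq F m)))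
  else [:: F 0%N (fun _ => 0)].

Definition srec F n := nth 0 (srec_seq F n) n.

Lemma size_srec_seq F n : size (srec_seq F n) = n.+1.
Proof. by elim: n => //= n IH; rewrite size_rcons IH. Qed.

Lemma nth_srec_seq F n m j : (j <= n)%N -> (n <= m)%N ->
  nth 0 (srec_seq F m) j = nth 0 (srec_seq F n) j.
Proof.
move=> hj; elim: m => [|m IH]; first by rewrite leqn0 => /eqP ->.
rewrite leq_eqVlt => /orP[/eqP -> //|hm] /=.
by rewrite nth_rcons size_srec_seq ifT ?IH //; lia.
Qed.

Lemma srecE F :
  (forall n s s', (forall j, (j < n)%N -> s j = s' j) -> F n s = F n s') ->
  forall n, srec F n = F n (srec F).
Proof.
move=> loc [|n]; first by rewrite /srec /=; apply: loc.
rewrite /srec /= nth_rcons size_srec_seq ltnn eqxx; apply: loc => j hj.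
by rewrite (@nth_srec_seq F j n j).
Qed.

Lemma LSinv_exists x : ~ x ~= LSzero -> exists y, LSmul x y ~= LSone.
Proof.
move=> /has_deg_exists [d [c0 hd]]; set c := coef x d.
pose a j := coef x (d - j%:Z).
pose F n (s : nat -> rat) :=
  if n is n'.+1 then - c^-1 * \sum_(i < n) a i.+1 * s (n' - i)%N else c^-1.
have loc n s s' : (forall j, (j < n)%N -> s j = s' j) -> F n s = F n s'.
  case: n => [|n] h //=; congr (_ * _); apply: eq_bigr => i _; rewrite h //.
  by have := ltn_ord i; lia.
pose X := mkLS d a.
have eX : x ~= X.
  move=> n; rewrite {2}/coef /=; case: ifP => h; last by rewrite hd //; lia.
  by rewrite /a; congr coef; lia.
exists (mkLS (- d) (srec F)); apply: eqLS_trans (LSmul_eql _ eX) _.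
have fcXY k : fc (LSmul X (mkLS (- d) (srec F))) k = (k == 0%N)%:R.
  rewrite /=; case: k => [|k]; first by rewrite big_ord1 /= srecE // /a subr0 mulfV.
  rewrite big_ord_recl /= srecE // /F /a subr0 mulrA mulrN mulfV // mulN1r.
  by rewrite -/a addNr.
move=> n; rewrite coefLS1 /coef fcXY /= addrN.
case: ifP => h; first by congr (_%:R); apply/eqP/eqP; lia.
by case: (n =P 0) => //; lia.
Qed.

Lemma LSmulV x : ~ x ~= LSzero -> LSmul x (LSinv x) ~= LSone.
Proof.
move=> nz; apply: (epsilon_spec (inhabits LSzero) (fun y => LSmul x y ~= LSone)).
exact: LSinv_exists.
Qed.

Lemma LSmul_eq0 x y : LSmul x y ~= LSzero -> x ~= LSzero \/ y ~= LSzero.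
Proof.
move=> h; case: (pselect (x ~= LSzero)) => hx; [by left|right].
apply: contrapT => hy.
have [d hd] := has_deg_exists hx; have [e he] := has_deg_exists hy.
exact: has_deg_neq0 (has_degM hd he).1 h.
Qed.

Lemma has_degV x d : has_deg x d ->
  has_deg (LSinv x) (- d) /\ coef (LSinv x) (- d) = (coef x d)^-1.
Proof.
move=> hd; have V := LSmulV (has_deg_neq0 hd).
have nzi : ~ LSinv x ~= LSzero.
  move=> h; apply: (has_deg_neq0 has_deg_one.1).
  by setoid_rewrite <- V; setoid_rewrite h; ring.
have [e he] := has_deg_exists nzi.
have [hm cm] := has_degM hd he.
have e0 := has_deg_uniq (eqLS_has_deg V hm) has_deg_one.1.
have -> : - d = e by lia.
split => //; have cd : coef x d != 0 by case: hd.
apply: (mulfI cd); rewrite mulfV // -cm e0.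
by rewrite (V 0) has_deg_one.2.
Qed.

Lemma has_deg_divr x y d e : has_deg (LSmul x y) d -> has_deg y e -> has_deg x (d - e).
Proof.
move=> hxy hy; have V := LSmulV (has_deg_neq0 hy).
have E : LSmul (LSmul x y) (LSinv y) ~= x.
  have -> : LSmul (LSmul x y) (LSinv y) ~= LSmul x (LSmul y (LSinv y)) by ring.
  by setoid_rewrite V; ring.
exact: eqLS_has_deg E (has_degM hxy (has_degV hy).1).1.
Qed.

Lemma deg_leP x D : (deg x <= (D%:~R)%:E)%E <-> deg_le x D.
Proof.
split=> [h n hn|h].
  apply/eqP; apply: contrapT => /negP hc.
  have : ((n%:~R : RR)%:E <= deg x)%E by apply: ereal_sup_ubound; exists n.
  by move=> /le_trans /(_ h); rewrite lee_fin ler_int; lia.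
apply: ge_ereal_sup => _ [n /= hn <-].
by rewrite lee_fin ler_int leNgt; apply/negP => hl; move: hn; rewrite h ?eqxx.
Qed.

Lemma degE x d : has_deg x d -> deg x = (d%:~R)%:E.
Proof.
move=> [c h]; apply/eqP; rewrite eq_le; apply/andP; split; first exact/deg_leP.
by apply: ereal_sup_ubound; exists d.
Qed.

(** * Continued fractions *)

Definition pos_deg x := exists d, 1 <= d /\ has_deg x d.
Definition cf_admissible (c : nat -> LS) := forall j, (0 < j)%N -> pos_deg (c j).

Lemma cf_admissible_tail c : cf_admissible c -> cf_admissible (fun k => c k.+1).
Proof. by move=> h j hj; apply: h. Qed.

Lemma has_deg_cfin n c d0 : cf_admissible c -> has_deg (c 0%N) d0 -> 1 <= d0 ->
  has_deg (cfin c n) d0.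
Proof.
elim: n c d0 => [|n IH] c d0 hc h0 hd0 //=.
have [d1 [hd1 i1]] := hc 1%N isT.
have [hi _] := has_degV (IH _ _ (cf_admissible_tail hc) i1 hd1).
by apply: (has_degDl h0 (deg_leW hi.2 _)).1; lia.
Qed.

Lemma deg_le_cfin_inv_tail c n : cf_admissible c ->
  deg_le (LSinv (cfin (fun k => c k.+1) n)) (-1).
Proof.
move=> hc; have [d1 [hd1 i1]] := hc 1%N isT.
have [hi _] := has_degV (has_deg_cfin n (cf_admissible_tail hc) i1 hd1).
by apply: deg_leW hi.2 _; lia.
Qed.

Lemma cfin_deg_le_neg c n : cf_admissible c -> c 0%N ~= LSzero -> (0 < n)%N ->
  deg_le (cfin c n) (-1).
Proof.
case: n => [|n] // hc h0 _ /=.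
exact: deg_leD (deg_le0 h0) (deg_le_cfin_inv_tail n hc).
Qed.

Lemma cfin_deg_le_top c n : cf_admissible c ->
  deg_le (cfin c n) (Num.max (top (c 0%N)) 0).
Proof.
have top_le : deg_le (c 0%N) (Num.max (top (c 0%N)) 0).
  by apply: (@deg_leW _ (top (c 0%N))); [apply: deg_le_top|rewrite le_max lexx].
case: n => [|n] hc //=; apply: deg_leD top_le _.
by apply: deg_leW (deg_le_cfin_inv_tail n hc) _; rewrite le_max; apply/orP; right.
Qed.

Lemma LSinvB u u' : ~ u ~= LSzero -> ~ u' ~= LSzero ->
  LSsub (LSinv u') (LSinv u) ~= LSmul (LSsub u u') (LSmul (LSinv u) (LSinv u')).
Proof.
move=> nz nz'; have V := LSmulV nz; have V' := LSmulV nz'.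
have -> : LSmul (LSsub u u') (LSmul (LSinv u) (LSinv u')) ~=
  LSsub (LSmul (LSmul u (LSinv u)) (LSinv u'))
        (LSmul (LSmul u' (LSinv u')) (LSinv u)) by ring.
by setoid_rewrite V; setoid_rewrite V'; ring.
Qed.

(* Since the partial quotients [c j], j > 0, have degree >= 1, the identity
   1/u' - 1/u = (u - u')/(u u') gains two orders of smallness per level. *)
Lemma cfinSB n c : cf_admissible c ->
  deg_le (LSsub (cfin c n.+1) (cfin c n)) (- (2 * n%:Z + 1)).
Proof.
elim: n c => [|n IH] c hc.
  apply: eqLS_deg_le (deg_le_cfin_inv_tail 0 hc); rewrite /=; ring.
have [d1 [hd1 i1]] := hc 1%N isT; set c' := fun k => c k.+1.
have hu := has_deg_cfin n (cf_admissible_tail hc) i1 hd1.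
have hu' := has_deg_cfin n.+1 (cf_admissible_tail hc) i1 hd1.
have E : LSsub (cfin c n.+2) (cfin c n.+1) ~=
    LSmul (LSsub (cfin c' n) (cfin c' n.+1))
          (LSmul (LSinv (cfin c' n)) (LSinv (cfin c' n.+1))).
  by rewrite -(LSinvB (has_deg_neq0 hu) (has_deg_neq0 hu')) /=; ring.
apply: eqLS_deg_le (eqLS_sym E) _.
have D1 : deg_le (LSsub (cfin c' n) (cfin c' n.+1)) (- (2 * n%:Z + 1)).
  by apply: eqLS_deg_le (deg_leN (IH c' (cf_admissible_tail hc))); ring.
have := deg_leM D1 (deg_leM (has_degV hu).1.2 (has_degV hu').1.2).
by move/deg_leW; apply; lia.
Qed.

Lemma cfinB c n m : cf_admissible c -> (n <= m)%N ->
  deg_le (LSsub (cfin c m) (cfin c n)) (- (2 * n%:Z + 1)).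
Proof.
move=> hc; elim: m => [|m IH].
  by rewrite leqn0 => /eqP ->; apply: deg_le0; ring.
rewrite leq_eqVlt => /orP[/eqP <-|hm]; first by apply: deg_le0; ring.
have E : LSsub (cfin c m.+1) (cfin c n) ~=
  LSadd (LSsub (cfin c m.+1) (cfin c m)) (LSsub (cfin c m) (cfin c n)) by ring.
apply: eqLS_deg_le (eqLS_sym E) (deg_leD _ (IH hm)).
by apply: deg_leW (@cfinSB m _ hc) _; lia.
Qed.

Lemma cf_limit_exists c : cf_admissible c -> exists L, cf_limit c L.
Proof.
move=> hc; set T0 := Num.max (top (c 0%N)) 0.
exists (mkLS T0 (fun k => coef (cfin c k) (T0 - k%:Z))) => M.
exists (absz M) => n hn m hm.
case: (lerP m T0) => hmT; last by rewrite (cfin_deg_le_top n hc) // coefLS_gt.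
rewrite {2}/coef /= hmT; set k := absz (T0 - m)%R.
have -> : T0 - k%:Z = m by rewrite /k; lia.
apply/eqP; rewrite -subr_eq0.
case: (leqP n k) => hnk.
  by rewrite -opprB oppr_eq0 -coefLSB (cfinB hc hnk) //; lia.
by rewrite -coefLSB (cfinB hc (ltnW hnk)) //; rewrite /k; lia.
Qed.

Lemma cf_limitP c : cf_admissible c -> cf_limit c (cf c).
Proof. by move=> hc; apply: epsilon_spec; apply: cf_limit_exists. Qed.

Lemma has_deg_cf c d0 : cf_admissible c -> has_deg (c 0%N) d0 -> 1 <= d0 ->
  has_deg (cf c) d0.
Proof.
move=> hc h0 hd0; have [n0 hn0] := cf_limitP hc (d0 - 1).
have [i1 i2] := has_deg_cfin n0 hc h0 hd0.
split; first by rewrite -(hn0 n0) //; lia.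
by move=> m hm; rewrite -(hn0 n0) ?i2 //; lia.
Qed.

Lemma cf_deg_le_neg c : cf_admissible c -> c 0%N ~= LSzero -> deg_le (cf c) (-1).
Proof.
move=> hc h0; have [n0 hn0] := cf_limitP hc (-1).
by move=> m hm; rewrite -(hn0 n0.+1) // (cfin_deg_le_neg hc h0).
Qed.

Lemma pos_deg_poly (p : {poly rat}) : (1 < size p)%N -> pos_deg (LSpoly p).
Proof.
move=> hs; have pn0 : p != 0 by rewrite -size_poly_gt0; lia.
by exists ((size p)%:Z - 1); split; [lia|exact: (has_deg_poly pn0).1].
Qed.

Lemma deg_lambda (g : int -> {poly rat}) i : (forall j, (1 < size (g j))%N) ->
  deg (lambda g i) = ((((size (g i))%:Z - 1)%:~R : RR))%:E.
Proof.
move=> hg; apply: degE; rewrite /lambda.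
have hc1 : cf_admissible (fun n => LSpoly (g (i + n%:Z))).
  by move=> j _; apply: pos_deg_poly.
have hc2 : cf_admissible (fun n => if n == 0%N then LSzero else LSpoly (g (i - n%:Z))).
  by move=> [|j] // _; apply: pos_deg_poly.
have pn0 : g i != 0 by rewrite -size_poly_gt0; have := hg i; lia.
have h0 : has_deg (LSpoly (g (i + (0%N)%:Z))) ((size (g i))%:Z - 1).
  by rewrite addr0; exact: (has_deg_poly pn0).1.
have hd : 1 <= (size (g i))%:Z - 1 by have := hg i; lia.
apply: (has_degDl (has_deg_cf hc1 h0 hd) (deg_leW (cf_deg_le_neg hc2 _) _)).1 => //.
lia.
Qed.

(** * The values of L *)

Local Open Scope classical_set_scope.

Definition int_ereal (x : \bar RR) := exists k : int, x = (k%:~R)%:E.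

Definition posints_pinfty : set (\bar RR) :=
  fun x => x = +oo%E \/ exists2 k : int, 0 < k & x = (k%:~R)%:E.

Lemma ge_ints_pinfty (y : \bar RR) : (forall j : int, ((j%:~R)%:E <= y)%E) -> y = +oo%E.
Proof.
case: y => [r| |] // h; last by have := h 0.
by have := h (Num.floor r + 1); rewrite lee_fin leNgt floorD1_gt.
Qed.

Lemma ereal_sup_int_mem (X : set (\bar RR)) : X `<=` int_ereal -> X !=set0 ->
  ereal_sup X != +oo%E -> X (ereal_sup X).
Proof.
move=> Xint [x0 Xx0] supfin.
have ub z : X z -> (z <= ereal_sup X)%E by move=> Xz; exact: ereal_sup_ubound.
have [k0 ek0] := Xint _ Xx0.
case E : (ereal_sup X) supfin ub => [r| |] // _ ub; last first.
  by have := ub _ Xx0; rewrite ek0.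
have [y Xy rk] : exists2 y, X y & ((r - 1)%:E < y)%E.
  by apply: ereal_sup_gt; rewrite E lte_fin gtrBl ltr01.
have [k ek] := Xint _ Xy; rewrite ek lte_fin in rk.
suff -> : r = k%:~R by rewrite -ek.
apply/eqP; rewrite eq_le; apply/andP; split; last by rewrite -lee_fin -ek ub.
rewrite -lee_fin -E; apply: ge_ereal_sup => z Xz; have [j ej] := Xint _ Xz.
have := ub _ Xz; rewrite ej !lee_fin ler_int -ltzD1 -(ltr_int RR) intrD1 => jr.
by apply: le_lt_trans jr _; rewrite -ltrBlDr.
Qed.

Lemma ereal_sup_posints (X : set (\bar RR)) :
  X `<=` int_ereal `|` [set +oo%E] -> X `&` posints_pinfty !=set0 ->
  posints_pinfty (ereal_sup X).
Proof.
move=> Xint [x0 [Xx0 Sx0]].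
have [->|supfin] := eqVneq (ereal_sup X) +oo%E; first by left.
have Xint' : X `<=` int_ereal.
  move=> z Xz; case: (Xint _ Xz) => // ez.
  by move: supfin; rewrite ereal_supy ?eqxx //; rewrite -ez.
have [k ek] := Xint' _ (ereal_sup_int_mem Xint' (ex_intro _ x0 Xx0) supfin).
have := ereal_sup_ubound Xx0; rewrite ek.
case: Sx0 => [->|[j j0 ->]]; first by rewrite leye_eq.
by rewrite lee_fin ler_int => jk; right; exists k => //; lia.
Qed.

Lemma ereal_inf_posints (X : set (\bar RR)) : X `<=` posints_pinfty -> X !=set0 ->
  posints_pinfty (ereal_inf X).
Proof.
move=> XS _.
have lb z : X z -> (ereal_inf X <= z)%E by move=> Xz; exact: ereal_inf_lbound.
have ge1 : (((1 : int)%:~R)%:E <= ereal_inf X)%E.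
  apply: le_ereal_inf_tmp => z /XS [->|[k k0 ->]]; first exact: leey.
  by rewrite lee_fin ler_int; lia.
case E : (ereal_inf X) ge1 lb => [r| |] // _ lb; last by left.
have [y Xy kr] : exists2 y, X y & (y < (r + 1)%:E)%E.
  by apply: ereal_inf_lt; rewrite E lte_fin ltrDl ltr01.
have [ey|[k k0 ek]] := XS _ Xy; first by rewrite ey ltNge leey in kr.
rewrite ek lte_fin in kr.
right; exists k => //; congr (_%:E); apply/eqP; rewrite eq_le; apply/andP; split.
  by rewrite -lee_fin -ek lb.
rewrite -lee_fin -E; apply: le_ereal_inf_tmp => z Xz; have [->|[j _ ej]] := XS _ Xz; first exact: leey.
have := lb _ Xz; rewrite ej !lee_fin ler_int -ltzD1 -(ltr_int RR) intrD1 => rj.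
by apply: lt_le_trans kr _; rewrite lerD2r.
Qed.

Lemma limn_esup_posints (u : nat -> \bar RR) : (forall n, posints_pinfty (u n)) ->
  posints_pinfty (limn_esup u).
Proof.
move=> hu; rewrite limn_esup_lim (cvg_lim (@ereal_hausdorff _) (@cvg_esups_inf _ u)).
apply: ereal_inf_posints; last by exists (esups u 0); exists 0%N.
move=> _ [n _ <-]; apply: ereal_sup_posints.
  by move=> _ [m _ <-]; case: (hu m) => [->|[k _ ->]]; [right|left; exists k].
by exists (u n); split => //; exists n => /=.
Qed.

Lemma limn_esup_eq_cst (u : nat -> \bar RR) a : (forall n, u n = a) -> limn_esup u = a.
Proof.
move=> hu; rewrite limn_esup_lim; have -> : esups u = fun=> a.
  apply/funext => n; apply/eqP; rewrite eq_le; apply/andP; split.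
    by apply: ge_ereal_sup => _ [m _ <-]; rewrite hu.
  by rewrite -(hu n); apply: ereal_sup_ubound; exists n => /=.
exact: lim_cst.
Qed.

Lemma limn_esup_unbounded (u : nat -> \bar RR) :
  (forall n, ((n%:Z%:~R)%:E <= u n)%E) -> limn_esup u = +oo%E.
Proof.
move=> hu; rewrite limn_esup_lim; have -> : esups u = fun=> +oo%E.
  apply/funext => n; apply: ge_ints_pinfty => j.
  apply: le_trans (ereal_sup_ubound _); last by exists (n + absz j)%N => //=; rewrite leq_addr.
  by apply: le_trans (hu _); rewrite lee_fin ler_int; lia.
exact: lim_cst.
Qed.

Lemma LA_posints (g : int -> {poly rat}) : (forall i, (1 < size (g i))%N) -> posints_pinfty (LA g).
Proof.
move=> hg; have hS i : posints_pinfty (deg (lambda g i)).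
  by rewrite deg_lambda //; right; exists ((size (g i))%:Z - 1) => //; have := hg i; lia.
by rewrite /LA /Order.max; case: ifP => _; apply: limn_esup_posints.
Qed.

Lemma LA_Xn (k : nat) : (0 < k)%N -> LA (fun=> 'X^k) = ((k%:Z)%:~R)%:E.
Proof.
move=> k0; have hg (i : int) : (1 < size (('X^k : {poly rat})))%N.
  by rewrite size_polyXn.
have dk i : deg (lambda (fun=> 'X^k) i) = ((k%:Z)%:~R)%:E.
  by rewrite deg_lambda // size_polyXn -addn1 PoszD addrK.
by rewrite /LA !(@limn_esup_eq_cst _ ((k%:Z)%:~R)%:E) // maxxx.
Qed.

Lemma LA_Xn_unbounded : LA (fun i => 'X^((absz i).+1)) = +oo%E.
Proof.
have hg (i : int) : (1 < size (('X^((absz i).+1) : {poly rat})))%N.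
  by rewrite size_polyXn.
have := @limn_esup_unbounded (fun n : nat => deg (lambda (fun i => 'X^((absz i).+1)) n%:Z)).
rewrite /LA => ->; first by rewrite /Order.max; case: ifP => //; rewrite ltNge leey.
by move=> n; rewrite deg_lambda // size_polyXn lee_fin ler_int; lia.
Qed.

Lemma L_valuesE : L_values = posints_pinfty.
Proof.
apply/seteqP; split; first by move=> _ [g /= hg <-]; apply: LA_posints.
move=> x [->|[k k0 ->]].
  by exists (fun i => 'X^((absz i).+1)); [move=> i /=; rewrite size_polyXn|exact: LA_Xn_unbounded].
exists (fun=> 'X^(absz k)); first by move=> i /=; rewrite size_polyXn; lia.
by rewrite LA_Xn; [congr (_%:E); congr (_%:~R); lia|lia].
Qed.

(** * Rational approximation *)

Definition ratf (pq : {poly rat} * {poly rat}) := LSdiv (LSpoly pq.1) (LSpoly pq.2).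

Definition approx_bound (q : {poly rat}) (k : int) : int := - 2 * ((size q)%:Z - 1) - k.

Definition approx_pairs a k : set ({poly rat} * {poly rat}) :=
  fun pq => pq.2 != 0 /\ deg_le (LSsub a (ratf pq)) (approx_bound pq.2 k).

Lemma approx_setE a k : approx_set a k = (fun pq => coef (ratf pq)) @` approx_pairs a k.
Proof.
by apply/seteqP; split => _ [pq [h1 h2] <-]; exists pq => //; split => //; apply/deg_leP.
Qed.

Lemma approx_set_le a k k' : k' <= k -> approx_set a k `<=` approx_set a k'.
Proof.
move=> hk; rewrite !approx_setE => _ [pq [h1 h2] <-]; exists pq => //; split => //.
by apply: deg_leW h2 _; rewrite /approx_bound; lia.
Qed.

(* Approximations whose errors have strictly decreasing degrees are distinct. *)
Lemma approx_set_infinite a k :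
  (forall B : int, exists pqd : ({poly rat} * {poly rat}) * int,
     approx_pairs a k pqd.1 /\ has_deg (LSsub a (ratf pqd.1)) pqd.2 /\ pqd.2 < B) ->
  infinite_set (approx_set a k).
Proof.
move=> /choice [f hf].
pose b := fix b n := if n is n'.+1 then (f (b n')).2 else 0.
pose s n := (f (b n)).1.
have hs n : approx_pairs a k (s n) /\
    has_deg (LSsub a (ratf (s n))) (b n.+1) /\ b n.+1 < b n by exact: hf.
have b_decr n m : (n < m)%N -> b m < b n.
  elim: m => // m IH; rewrite ltnS leq_eqVlt => /orP[/eqP ->|h]; first exact: (hs _).2.2.
  by have := (hs m).2.2; have := IH h; lia.
have b_inj : injective b.
  move=> n m e; apply/eqP; case: (ltngtP n m) => // h.
    by have := b_decr _ _ h; rewrite e ltxx.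
  by have := b_decr _ _ h; rewrite e ltxx.
have F_inj : {in [set: nat] &, injective (fun n => coef (ratf (s n)))}.
  move=> n m _ _ e; apply/succn_inj/b_inj/(has_deg_uniq (hs n).2.1).
  by apply: eqLS_has_deg (hs m).2.1 => t; rewrite !coefLSB e.
apply/infiniteP; have [_ h2] := (card_eqPle _ _).1 (inj_card_eq F_inj).
apply: card_le_trans h2 _; apply: subset_card_le => _ [n _ <-].
by rewrite approx_setE; exists (s n) => //; have [] := hs n.
Qed.

Lemma LSsub_ratfE a p q : q != 0 ->
  LSsub a (ratf (p, q)) ~= LSmul (LSsub (LSmul (LSpoly q) a) (LSpoly p)) (LSinv (LSpoly q)).
Proof.
move=> hq; have V := LSmulV (LSpoly_neq0 hq); rewrite /ratf /LSdiv /=.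
have -> : LSmul (LSsub (LSmul (LSpoly q) a) (LSpoly p)) (LSinv (LSpoly q)) ~=
  LSsub (LSmul a (LSmul (LSpoly q) (LSinv (LSpoly q))))
        (LSmul (LSpoly p) (LSinv (LSpoly q))) by ring.
by setoid_rewrite V; ring.
Qed.

Lemma deg_le_sub_ratf a p q D : q != 0 ->
  deg_le (LSsub (LSmul (LSpoly q) a) (LSpoly p)) D ->
  deg_le (LSsub a (ratf (p, q))) (D - ((size q)%:Z - 1)).
Proof.
move=> hq hD; apply: eqLS_deg_le (eqLS_sym (LSsub_ratfE a p hq)) _.
exact: deg_leM hD (has_degV (has_deg_poly hq).1).1.2.
Qed.

Lemma has_deg_sub_ratf a p q d : q != 0 ->
  has_deg (LSsub (LSmul (LSpoly q) a) (LSpoly p)) d ->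
  has_deg (LSsub a (ratf (p, q))) (d - ((size q)%:Z - 1)).
Proof.
move=> hq hd; apply: eqLS_has_deg (eqLS_sym (LSsub_ratfE a p hq)) _.
exact: (has_degM hd (has_degV (has_deg_poly hq).1).1).1.
Qed.

Lemma has_deg_sub_ratf_ge a r s p q : s != 0 -> q != 0 -> a ~= ratf (r, s) ->
  ~ LSsub a (ratf (p, q)) ~= LSzero ->
  exists2 d, has_deg (LSsub a (ratf (p, q))) d &
    - ((size s)%:Z - 1) - ((size q)%:Z - 1) <= d.
Proof.
move=> hs hq ea nz.
have S := LSmulV (LSpoly_neq0 hs); have Q := LSmulV (LSpoly_neq0 hq).
set N := LSsub (LSmul (LSpoly r) (LSpoly q)) (LSmul (LSpoly p) (LSpoly s)).
have E : LSsub a (ratf (p, q)) ~= LSmul N (LSmul (LSinv (LSpoly s)) (LSinv (LSpoly q))).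
  apply: eqLS_trans (LSadd_eq ea (eqLS_refl _)) _; rewrite /ratf /LSdiv /= /N.
  have -> : LSmul (LSsub (LSmul (LSpoly r) (LSpoly q)) (LSmul (LSpoly p) (LSpoly s)))
      (LSmul (LSinv (LSpoly s)) (LSinv (LSpoly q))) ~=
    LSsub (LSmul (LSmul (LSpoly r) (LSinv (LSpoly s))) (LSmul (LSpoly q) (LSinv (LSpoly q))))
      (LSmul (LSmul (LSpoly p) (LSinv (LSpoly q))) (LSmul (LSpoly s) (LSinv (LSpoly s)))).
    by ring.
  by setoid_rewrite S; setoid_rewrite Q; ring.
have nzN : ~ N ~= LSzero by move=> h; apply: nz; setoid_rewrite E; setoid_rewrite h; ring.
have intN : integral_series N.
  by apply: integral_seriesD; [|apply: integral_seriesN]; apply: integral_seriesM; apply: integral_series_poly.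
have [dN hN] := has_deg_exists nzN.
have dN0 := integral_series_has_deg_ge0 intN hN.
have [hSQ _] := has_degM (has_degV (has_deg_poly hs).1).1 (has_degV (has_deg_poly hq).1).1.
exists (dN + (- ((size s)%:Z - 1) + - ((size q)%:Z - 1))); last by lia.
exact: eqLS_has_deg (eqLS_sym E) (has_degM hN hSQ).1.
Qed.

Lemma not_ratfun_of_approx a :
  (forall C : int, exists pq d, pq.2 != 0 /\
     has_deg (LSsub a (ratf pq)) d /\ d + ((size pq.2)%:Z - 1) < C) ->
  ~ is_ratfun a.
Proof.
move=> H [r [s [hs ea]]].
have [[p q] [d [/= hq [hd hc]]]] := H (- ((size s)%:Z - 1)).
have [d' hd' hb] := has_deg_sub_ratf_ge hs hq ea (has_deg_neq0 hd).
by move: hc hb; rewrite (has_deg_uniq hd hd'); move: (size s) (size q) => ss sq; lia.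
Qed.

Lemma nonzero_row_kernel (m n : nat) (A : 'M[rat]_(m, n)) : (n < m)%N ->
  exists2 v : 'rV[rat]_m, v != 0 & v *m A = 0.
Proof.
move=> hnm; have Kn0 : kermx A != 0.
  by rewrite -mxrank_eq0 mxrank_ker; have := rank_leq_col A; lia.
have [i hi] : exists i, row i (kermx A) != 0.
  apply: contrapT => hh; move/eqP: Kn0; apply; apply/row_matrixP => i.
  by rewrite row0; apply/eqP; apply: contrapT => h; apply: hh; exists i; apply/negP.
by exists (row i (kermx A)) => //; rewrite -row_mul mulmx_ker row0.
Qed.

(* Linear algebra: N homogeneous equations in the N+1 coefficients of q. *)
Lemma exists_poly_killing_coefs a N : exists2 q : {poly rat},
  q != 0 /\ (size q <= N.+1)%N &
  forall m : nat, (m < N)%N -> coef (LSmul (LSpoly q) a) (- (m%:Z + 1)) = 0.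
Proof.
pose A : 'M[rat]_(N.+1, N) :=
  \matrix_(j, m) coef a (- ((m : nat)%:Z + 1) - N%:Z + (j : nat)%:Z).
have [v vn0 vA] := nonzero_row_kernel A (ltnSn N).
pose q : {poly rat} := \poly_(l < N.+1) v 0 (inord (N - l)).
have qc (j : 'I_N.+1) : q`_(N - j) = v 0 j.
  have hj := ltn_ord j; rewrite coef_poly ifT; last by lia.
  by congr (v 0 _); apply: val_inj; rewrite /= inordK; lia.
have sq : (size q <= N.+1)%N by apply: size_poly.
exists q.
  split => //; apply: contraNneq vn0 => q0; apply/eqP/rowP => j.
  by rewrite mxE -qc q0 coef0.
move=> m hm; have := congr1 (fun M : 'M[rat]_(1, N) => M 0 (Ordinal hm)) vA.
rewrite !mxE => <-.
rewrite (@coefLSM _ _ _ N%:Z N.+1) => [|i hi|i hi].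
- rewrite /conv_window; apply: eq_bigr => j _; have hj := ltn_ord j.
  rewrite /conv_term coefLSP ifT; last by lia.
  have -> : absz (N%:Z - (j : nat)%:Z) = (N - j)%N by lia.
  by rewrite qc mxE /=; congr (_ * coef a _); lia.
- by rewrite /conv_term coefLSP ifT ?nth_default ?mul0r //; [apply: leq_trans sq _|]; lia.
- by rewrite /conv_term coefLSP ifF ?mul0r //; apply/negbTE; lia.
Qed.

Definition polypart x : {poly rat} := \poly_(l < (absz (top x)).+1) coef x l%:Z.

Lemma coef_sub_polypart x n :
  coef (LSsub x (LSpoly (polypart x))) n = if n < 0 then coef x n else 0.
Proof.
rewrite coefLSB coefLSP; case: ifP => h0; last by rewrite ifT ?subr0 //; lia.
rewrite ifF; last by apply/negbTE; lia.
rewrite coef_poly; case: ifP => hK; first by rewrite gez0_abs ?subrr.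
by rewrite coefLS_gt ?subr0 //; move/negbT: hK; lia.
Qed.

Lemma dirichlet a : ~ is_ratfun a -> forall B : int,
  exists pqd : ({poly rat} * {poly rat}) * int,
    approx_pairs a 1 pqd.1 /\ has_deg (LSsub a (ratf pqd.1)) pqd.2 /\ pqd.2 < B.
Proof.
move=> irr B; set N := absz B.
have [q [hq sq] vanish] := exists_poly_killing_coefs a N.
set p := polypart (LSmul (LSpoly q) a).
have hX : deg_le (LSsub (LSmul (LSpoly q) a) (LSpoly p)) (- N%:Z - 1).
  move=> n hn; rewrite coef_sub_polypart; case: ifP => // hn0.
  have e : - ((absz n).-1%:Z + 1) = n by lia.
  by rewrite -e vanish //; lia.
have hle := deg_le_sub_ratf hq hX.
have nz : ~ LSsub a (ratf (p, q)) ~= LSzero.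
  move=> /eqLS0P h; apply: irr; exists p, q; split => // n.
  by have := h n; rewrite coefLSB => /eqP; rewrite subr_eq0 => /eqP.
have [d hd] := has_deg_exists nz; have dle := has_deg_le hd hle.
have sq0 : (0 < size q)%N by rewrite size_poly_gt0.
exists ((p, q), d); split; last by split => //=; move: dle sq0; move: (size q) => s; lia.
split => //=; apply: deg_leW hle _; rewrite /approx_bound.
by move: sq; move: (size q) => s; lia.
Qed.

Lemma lagr_posints a : ~ is_ratfun a -> posints_pinfty (lagr a).
Proof.
move=> irr; apply: ereal_sup_posints; first by move=> _ [k _ <-]; left; exists k.
exists ((1%:~R)%:E); split; last by right; exists 1.
by exists 1 => //; apply: approx_set_infinite; apply: dirichlet.
Qed.

(** * A Liouville series *)

Lemma coefLS_Xn_mul (N : nat) x n : coef (LSmul (LSpoly 'X^N) x) n = coef x (n - N%:Z).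
Proof.
have t0 i : i != N%:Z -> conv_term (LSpoly 'X^N) x n i = 0.
  move=> hi; rewrite /conv_term coefLSP coefXn; case: ifP => h; last by rewrite mul0r.
  by case: (absz i =P N) => [e|_]; [case/eqP: hi; lia|rewrite mul0r].
rewrite (@coefLSM _ _ n N%:Z 1) => [|i hi|i hi]; last 2 first.
- by apply: t0; lia.
- by apply: t0; lia.
by rewrite /conv_window big_ord1 /conv_term subr0 coefLSP coefXn absz_nat eqxx mul1r.
Qed.

Definition is_pow3 (k : nat) : bool := has (fun m => 3 ^ m == k)%N (iota 0 k.+1).

Lemma is_pow3P k : reflect (exists m, k = 3 ^ m)%N (is_pow3 k).
Proof.
apply: (iffP hasP) => [[m _ /eqP <-]|[m ->]]; first by exists m.
by exists m => //; rewrite mem_iota /= add0n ltnS ltnW // ltn_expl.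
Qed.

(* [mkLS 0 f] is the series sum_k f k T^-k, so this is sum_m T^(-3^m). *)
Definition liouville_series := mkLS 0 (fun k => if is_pow3 k then 1 else 0).

Lemma coef_liouville n :
  coef liouville_series n = if (n <= 0) && is_pow3 (absz n) then 1 else 0.
Proof. by rewrite /coef /=; case: ifP => h //=; rewrite sub0r abszN. Qed.

(* Truncating the series after T^(-3^m) leaves an error of degree -3^(m+1). *)
Lemma liouville_approx (m : nat) : exists p q : {poly rat},
  q != 0 /\ (size q)%:Z - 1 = (3 ^ m)%N%:Z /\
  has_deg (LSsub liouville_series (ratf (p, q))) (- (3 ^ m.+1)%N%:Z).
Proof.
set N := (3 ^ m)%N; set q : {poly rat} := 'X^N.
have N3 : (3 ^ m.+1 = 3 * N)%N by rewrite expnS.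
exists (polypart (LSmul (LSpoly q) liouville_series)), q.
have hq : q != 0 by rewrite monic_neq0 ?monicXn.
have sq : (size q)%:Z - 1 = N%:Z by rewrite size_polyXn; lia.
do 2 split => //.
have -> : - (3 ^ m.+1)%N%:Z = (N%:Z - (3 ^ m.+1)%N%:Z) - ((size q)%:Z - 1).
  by rewrite sq; lia.
apply: has_deg_sub_ratf => //; split.
  rewrite coef_sub_polypart ifT; last by rewrite /N; lia.
  rewrite coefLS_Xn_mul coef_liouville ifT ?oner_eq0 //; apply/andP; split; first by lia.
  by apply/is_pow3P; exists m.+1; lia.
move=> n hn; rewrite coef_sub_polypart; case: ifP => // hn0.
rewrite coefLS_Xn_mul coef_liouville; case: ifP => //; case/andP => _ /is_pow3P [j hj].
have : (3 ^ m < 3 ^ j < 3 ^ m.+1)%N by rewrite -hj; lia.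
by rewrite !ltn_exp2l //; lia.
Qed.

Lemma liouville_not_ratfun : ~ is_ratfun liouville_series.
Proof.
apply: not_ratfun_of_approx => C.
have [p [q [hq [sq hd]]]] := liouville_approx (absz C).
exists (p, q), (- (3 ^ (absz C).+1)%N%:Z); do 2 split => //.
by rewrite /= sq expnS; have := ltn_expl (absz C) (isT : (1 < 3)%N); lia.
Qed.

Lemma approx_set_liouville_infinite k : infinite_set (approx_set liouville_series k).
Proof.
apply: approx_set_infinite => B; set m := (absz B + absz k)%N.
have [p [q [hq [sq hd]]]] := liouville_approx m.
have m3 := ltn_expl m (isT : (1 < 3)%N).
exists ((p, q), - (3 ^ m.+1)%N%:Z); split; last split => //.
  split => //; apply: deg_leW hd.2 _; rewrite /approx_bound /= sq expnS /m in m3 *; lia.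
by rewrite /= expnS /m in m3 *; lia.
Qed.

Lemma lagr_liouville : lagr liouville_series = +oo%E.
Proof.
apply: ge_ints_pinfty => j; apply: ereal_sup_ubound; exists j => //.
exact: approx_set_liouville_infinite.
Qed.

(** * Square roots of T^2k - 1 *)

Lemma sub_ratf_mul_add a Z p q : q != 0 -> LSmul a a ~= Z ->
  LSmul (LSsub a (ratf (p, q))) (LSadd a (ratf (p, q))) ~=
  LSmul (LSsub (LSmul Z (LSmul (LSpoly q) (LSpoly q))) (LSmul (LSpoly p) (LSpoly p)))
        (LSmul (LSinv (LSpoly q)) (LSinv (LSpoly q))).
Proof.
move=> hq hZ; rewrite /ratf /LSdiv /=.
set P := LSpoly p; set Q := LSpoly q; set iQ := LSinv Q.
have V : LSmul Q iQ ~= LSone := LSmulV (LSpoly_neq0 hq).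
have -> : LSmul (LSsub a (LSmul P iQ)) (LSadd a (LSmul P iQ)) ~=
  LSsub (LSmul a a) (LSmul (LSmul P P) (LSmul iQ iQ)) by ring.
have -> : LSmul (LSsub (LSmul Z (LSmul Q Q)) (LSmul P P)) (LSmul iQ iQ) ~=
  LSsub (LSmul Z (LSmul (LSmul Q iQ) (LSmul Q iQ))) (LSmul (LSmul P P) (LSmul iQ iQ)).
  by ring.
by setoid_rewrite hZ; setoid_rewrite V; ring.
Qed.

(* If a^2 is a polynomial, (a - p/q)(a + p/q) q^2 is a polynomial; when the
   approximation is too good it has negative degree, hence vanishes. *)
Lemma quadratic_approx_gap a (D : {poly rat}) (k : int) pq :
  LSmul a a ~= LSpoly D -> has_deg a k -> 0 < coef a k -> 0 <= k ->
  approx_pairs a (k + 1) pq -> a ~= ratf pq.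
Proof.
case: pq => p q aa ha ca k0 [/= hq he].
set P := LSpoly p; set Q := LSpoly q.
set e := LSsub a (ratf (p, q)); set f := LSadd a (ratf (p, q)).
have sq0 : (0 < size q)%N by rewrite size_poly_gt0.
have hf : has_deg f k.
  have Ef : f ~= LSadd (LSadd a a) (LSopp e) by rewrite /f /e; ring.
  apply: eqLS_has_deg (eqLS_sym Ef) (has_degDl (has_degD_pos ha ha ca ca).1 _).1.
  by apply/deg_leN/(deg_leW he); rewrite /approx_bound; move: sq0; move: (size q) => s; lia.
set M := LSsub (LSmul (LSpoly D) (LSmul Q Q)) (LSmul P P).
have intM : integral_series M.
  by apply: integral_seriesD; [|apply: integral_seriesN];
     apply: integral_seriesM; rewrite ?/Q; try apply: integral_seriesM;
     apply: integral_series_poly.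
have EF : LSmul e f ~= LSmul M (LSmul (LSinv Q) (LSinv Q)) := sub_ratf_mul_add p hq aa.
have EM : M ~= LSmul (LSmul e f) (LSmul Q Q).
  have V : LSmul Q (LSinv Q) ~= LSone := LSmulV (LSpoly_neq0 hq).
  setoid_rewrite EF.
  have -> : LSmul (LSmul M (LSmul (LSinv Q) (LSinv Q))) (LSmul Q Q) ~=
    LSmul M (LSmul (LSmul Q (LSinv Q)) (LSmul Q (LSinv Q))) by ring.
  by setoid_rewrite V; ring.
have hQ := (has_deg_poly hq).1.
have M0 : M ~= LSzero.
  apply: integral_series_deg_le_neg intM (eqLS_deg_le (eqLS_sym EM) _).
  have := deg_leM (deg_leM he hf.2) (deg_leM hQ.2 hQ.2).
  by move/deg_leW; apply; rewrite /approx_bound; lia.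
have ef0 : LSmul e f ~= LSzero by setoid_rewrite EF; setoid_rewrite M0; ring.
case: (LSmul_eq0 ef0) => [e0|f0]; last by case: (has_deg_neq0 hf f0).
have -> : a ~= LSadd e (ratf (p, q)) by rewrite /e; ring.
by setoid_rewrite e0; ring.
Qed.

Section SqrtSeries.
Variable k : nat.
Hypothesis k_gt0 : (0 < k)%N.

Definition pell_disc : {poly rat} := 'X^(k + k) - 1.

Lemma has_deg_pell_disc :
  has_deg (LSpoly pell_disc) (k + k)%N%:Z /\ coef (LSpoly pell_disc) (k + k)%N%:Z = 1.
Proof.
have hD : pell_disc != 0 by rewrite -size_poly_gt0 size_XnsubC //; lia.
have [h1 h2] := has_deg_poly hD.
have sD : (size pell_disc)%:Z - 1 = (k + k)%N%:Z by rewrite size_XnsubC; lia.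
rewrite sD in h1 h2; split => //; rewrite h2 lead_coefXnsubC //; lia.
Qed.

Definition disc_coef (n : nat) := coef (LSpoly pell_disc) ((k + k)%N%:Z - n%:Z).

(* Coefficients of the square root T^k - T^-k/2 - ... of T^2k - 1, solving
   sum_(j <= n) y_j y_(n-j) = disc_coef n for y_n. *)
Definition sqrt_coef_step (n : nat) (s : nat -> rat) : rat :=
  if n is n'.+1 then (disc_coef n - \sum_(i < n') s i.+1 * s (n' - i)%N) / 2 else 1.

Definition sqrt_coef := srec sqrt_coef_step.

Definition sqrt_series := mkLS k%:Z sqrt_coef.

Lemma sqrt_coef_step_local n s s' :
  (forall j, (j < n)%N -> s j = s' j) -> sqrt_coef_step n s = sqrt_coef_step n s'.
Proof.
case: n => [|n] h //=; congr ((_ - _) / 2); apply: eq_bigr => i _.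
by have := ltn_ord i; move=> hi; rewrite !h //; lia.
Qed.

Lemma sqrt_coef0 : sqrt_coef 0 = 1.
Proof. by rewrite /sqrt_coef srecE //; apply: sqrt_coef_step_local. Qed.

Lemma conv_sqrt_coef n :
  \sum_(j < n.+1) sqrt_coef j * sqrt_coef (n - j)%N = disc_coef n.
Proof.
case: n => [|n].
  by rewrite big_ord1 /= sqrt_coef0 mul1r /disc_coef subr0 has_deg_pell_disc.2.
rewrite big_ord_recl big_ord_recr /= subn0 subnn sqrt_coef0 mul1r mulr1.
rewrite [sqrt_coef n.+1]/sqrt_coef srecE; last exact: sqrt_coef_step_local.
rewrite /sqrt_coef_step -/sqrt_coef.
set S := \sum_(i < n) _; set t := (disc_coef n.+1 - S) / 2.
have -> : t + (S + t) = t * 2 + S by rewrite mulr_natr mulr2n addrC -addrA (addrC S).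
by rewrite /t divfK // subrK.
Qed.

Lemma sqrt_series_sq : LSmul sqrt_series sqrt_series ~= LSpoly pell_disc.
Proof.
move=> m; rewrite {1}/coef /= -PoszD; case: ifP => hm; last first.
  by rewrite has_deg_pell_disc.1.2 //; lia.
by rewrite conv_sqrt_coef /disc_coef; congr coef; lia.
Qed.

Lemma has_deg_sqrt_series : has_deg sqrt_series k%:Z /\ coef sqrt_series k%:Z = 1.
Proof.
have E : coef sqrt_series k%:Z = 1 by rewrite /coef /= lexx subrr /= sqrt_coef0.
by split => //; split; [rewrite E oner_eq0|exact: deg_le_top].
Qed.

(* Solutions of the Pell equation D Q^2 - P^2 = -1, D = T^2k - 1, obtained
   from (T^k, 1) by multiplication with the unit T^k + sqrt D. *)
Fixpoint pell_sol (n : nat) : {poly rat} * {poly rat} :=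
  if n is n'.+1 then
    ('X^k * (pell_sol n').1 + pell_disc * (pell_sol n').2,
     (pell_sol n').1 + 'X^k * (pell_sol n').2)
  else ('X^k, 1).

Lemma LSpoly_pell_solS n :
  LSpoly (pell_sol n.+1).1 ~= LSadd (LSmul (LSpoly 'X^k) (LSpoly (pell_sol n).1))
                                    (LSmul (LSpoly pell_disc) (LSpoly (pell_sol n).2)) /\
  LSpoly (pell_sol n.+1).2 ~= LSadd (LSpoly (pell_sol n).1)
                                    (LSmul (LSpoly 'X^k) (LSpoly (pell_sol n).2)).
Proof.
split; apply: eqLS_trans (LSpolyD _ _) _; apply: LSadd_eq => //; exact: LSpolyM.
Qed.

Lemma has_deg_Xk : has_deg (LSpoly 'X^k) k%:Z /\ coef (LSpoly 'X^k) k%:Z = 1.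
Proof.
have [h1 h2] := has_deg_poly (monic_neq0 (monicXn rat k)).
by rewrite size_polyXn lead_coefXn (_ : k.+1%:Z - 1 = k%:Z) in h1 h2; [|lia].
Qed.

Lemma pell_sol_deg n :
  [/\ has_deg (LSpoly (pell_sol n).1) (n.+1 * k)%N%:Z,
      0 < coef (LSpoly (pell_sol n).1) (n.+1 * k)%N%:Z,
      has_deg (LSpoly (pell_sol n).2) (n * k)%N%:Z &
      0 < coef (LSpoly (pell_sol n).2) (n * k)%N%:Z].
Proof.
have [iT cT] := has_deg_Xk; have [iD cD] := has_deg_pell_disc.
elim: n => [|n [iP cP iQ cQ]].
  by rewrite mul1n mul0n; split; rewrite ?cT ?has_deg_one.2 //; exact: has_deg_one.1.
have [EP EQ] := LSpoly_pell_solS n.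
have [iTP cTP] := has_degM iT iP; have [iDQ cDQ] := has_degM iD iQ.
have [iTQ cTQ] := has_degM iT iQ.
rewrite (_ : k%:Z + _ = (n.+2 * k)%N%:Z) in iTP cTP; last by lia.
rewrite (_ : (k + k)%N%:Z + _ = (n.+2 * k)%N%:Z) in iDQ cDQ; last by lia.
rewrite (_ : k%:Z + _ = (n.+1 * k)%N%:Z) in iTQ cTQ; last by lia.
have pTP : 0 < coef (LSmul (LSpoly 'X^k) (LSpoly (pell_sol n).1)) (n.+2 * k)%N%:Z.
  by rewrite cTP cT mul1r.
have pDQ : 0 < coef (LSmul (LSpoly pell_disc) (LSpoly (pell_sol n).2)) (n.+2 * k)%N%:Z.
  by rewrite cDQ cD mul1r.
have pTQ : 0 < coef (LSmul (LSpoly 'X^k) (LSpoly (pell_sol n).2)) (n.+1 * k)%N%:Z.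
  by rewrite cTQ cT mul1r.
have [iP' cP'] := has_degD_pos iTP iDQ pTP pDQ.
have [iQ' cQ'] := has_degD_pos iP iTQ cP pTQ.
split; [exact: eqLS_has_deg (eqLS_sym EP) iP'|by rewrite EP cP' addr_gt0|
  exact: eqLS_has_deg (eqLS_sym EQ) iQ'|by rewrite EQ cQ' addr_gt0].
Qed.

Lemma pell_sol_norm n :
  LSsub (LSmul (LSpoly pell_disc) (LSmul (LSpoly (pell_sol n).2) (LSpoly (pell_sol n).2)))
        (LSmul (LSpoly (pell_sol n).1) (LSpoly (pell_sol n).1)) ~= LSopp LSone.
Proof.
set T := LSpoly 'X^k; set D := LSpoly pell_disc.
have TT : LSmul T T ~= LSadd D LSone.
  apply: eqLS_trans (eqLS_sym (LSpolyM _ _)) _; apply: eqLS_trans _ (LSpolyD _ _).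
  by rewrite /pell_disc subrK -exprD.
elim: n => [|n IH] /=.
  have -> : LSsub (LSmul D (LSmul (LSpoly 1) (LSpoly 1))) (LSmul T T) ~=
    LSsub D (LSmul T T) by rewrite -/LSone; ring.
  by setoid_rewrite TT; ring.
have [EP EQ] := LSpoly_pell_solS n; rewrite -/T -/D in EP EQ.
set P := LSpoly (pell_sol n).1 in EP EQ IH; set Q := LSpoly (pell_sol n).2 in EP EQ IH.
setoid_rewrite EP; setoid_rewrite EQ.
have -> : LSsub (LSmul D (LSmul (LSadd P (LSmul T Q)) (LSadd P (LSmul T Q))))
      (LSmul (LSadd (LSmul T P) (LSmul D Q)) (LSadd (LSmul T P) (LSmul D Q))) ~=
    LSmul (LSsub (LSmul T T) D) (LSsub (LSmul D (LSmul Q Q)) (LSmul P P)) by ring.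
by setoid_rewrite IH; setoid_rewrite TT; ring.
Qed.

Lemma pell_approx n :
  [/\ (pell_sol n).2 != 0, (size (pell_sol n).2)%:Z - 1 = (n * k)%N%:Z &
      has_deg (LSsub sqrt_series (ratf (pell_sol n))) (- 2 * (n * k)%N%:Z - k%:Z)].
Proof.
have [iP cP iQ cQ] := pell_sol_deg n.
have hq := has_deg_poly_neq0 iQ.
split => //; first exact: has_deg_uniq (has_deg_poly hq).1 iQ.
set P := LSpoly (pell_sol n).1 in iP cP; set Q := LSpoly (pell_sol n).2 in iQ cQ.
have [iA cA] := has_deg_sqrt_series.
have [iiQ ciQ] := has_degV iQ.
have [iPQ cPQ] := has_degM iP iiQ.
rewrite (_ : (n.+1 * k)%N%:Z + - (n * k)%N%:Z = k%:Z) in iPQ cPQ; last by lia.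
have pPQ : 0 < coef (LSmul P (LSinv Q)) k%:Z by rewrite cPQ ciQ divr_gt0.
have pA : 0 < coef sqrt_series k%:Z by rewrite cA.
have [iF _] := has_degD_pos iA iPQ pA pPQ.
have EF := sub_ratf_mul_add (pell_sol n).1 hq sqrt_series_sq.
have hEF : has_deg (LSmul (LSsub sqrt_series (ratf (pell_sol n)))
                          (LSadd sqrt_series (ratf (pell_sol n))))
                   (0 + (- (n * k)%N%:Z + - (n * k)%N%:Z)).
  apply: eqLS_has_deg (eqLS_sym EF) _.
  have E2 : LSmul (LSsub (LSmul (LSpoly pell_disc) (LSmul Q Q)) (LSmul P P))
      (LSmul (LSinv Q) (LSinv Q)) ~= LSmul (LSopp LSone) (LSmul (LSinv Q) (LSinv Q)).
    by apply: LSmul_eq => //; exact: pell_sol_norm.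
  exact: eqLS_has_deg (eqLS_sym E2) (has_degM (has_degN has_deg_one.1) (has_degM iiQ iiQ).1).1.
by have := has_deg_divr hEF iF; congr has_deg; lia.
Qed.

Lemma sqrt_series_not_ratfun : ~ is_ratfun sqrt_series.
Proof.
apply: not_ratfun_of_approx => C; have [hq sq hd] := pell_approx (absz C).
have nk : (absz C <= absz C * k)%N by rewrite leq_pmulr.
exists (pell_sol (absz C)), (- 2 * (absz C * k)%N%:Z - k%:Z); do 2 split => //.
by rewrite sq; lia.
Qed.

Lemma approx_set_sqrt_series_infinite : infinite_set (approx_set sqrt_series k%:Z).
Proof.
apply: approx_set_infinite => B; have [hq sq hd] := pell_approx (absz B).
have nk : (absz B <= absz B * k)%N by rewrite leq_pmulr.
exists (pell_sol (absz B), - 2 * (absz B * k)%N%:Z - k%:Z); split; last split => //=.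
  by split => //; apply: deg_leW hd.2 _; rewrite /approx_bound sq.
by lia.
Qed.

Lemma approx_set_sqrt_series_gap : approx_set sqrt_series (k%:Z + 1) = set0.
Proof.
rewrite approx_setE; apply/seteqP; split => // x [pq hpq _].
exfalso; apply: sqrt_series_not_ratfun; exists pq.1, pq.2; split; first by case: hpq.
have [iA cA] := has_deg_sqrt_series.
by apply: quadratic_approx_gap sqrt_series_sq iA _ _ hpq; rewrite ?cA.
Qed.

Lemma lagr_sqrt_series : lagr sqrt_series = ((k%:Z)%:~R)%:E.
Proof.
apply/eqP; rewrite eq_le; apply/andP; split.
  apply: ge_ereal_sup => _ [j /= hj <-]; rewrite lee_fin ler_int.
  rewrite leNgt; apply/negP => hjk; apply: hj.
  apply: (@sub_finite_set _ _ (approx_set sqrt_series (k%:Z + 1))).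
    by apply: approx_set_le; lia.
  by rewrite approx_set_sqrt_series_gap.
by apply: ereal_sup_ubound; exists k%:Z => //; exact: approx_set_sqrt_series_infinite.
Qed.

End SqrtSeries.

Lemma lagrange_spectrumE : lagrange_spectrum = posints_pinfty.
Proof.
apply/seteqP; split; first by move=> _ [a /= irr <-]; apply: lagr_posints.
move=> x [->|[k k0 ->]].
  by exists liouville_series; [exact: liouville_not_ratfun|exact: lagr_liouville].
have k_gt0 : (0 < absz k)%N by lia.
have ek : (absz k)%:Z = k by lia.
exists (sqrt_series (absz k)); first exact: sqrt_series_not_ratfun.
by rewrite lagr_sqrt_series // ek.
Qed.

Theorem theorem9 : lagrange_spectrum = L_values.
Proof. by rewrite lagrange_spectrumE L_valuesE. Qed.
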